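(* Let $n\ge 2$, $a\ge\sqrt{n-1}$, $f(x)=a|x^{(1)}|+\sum_{i=2}^n x^{(i)}$ on $\mathbb{R}^n$, and $0<c_1<c_2<1$. Let $x_0\in\mathbb{R}^n$ with $x_0^{(1)}\ne 0$, and define $x_{k+1}=x_k+t_kd_k$ with $d_k=-\nabla f(x_k)$, where the steps $t_k$ satisfy $A(t_k)$ and $W(t_k)$ for all $k=0,1,2,\dots$. Let $S_N=\sum_{k=0}^{N-1}t_k$. Then for every $N\ge1$, $$c_1(a^2+n-1)S_N\le f(x_0)-f(x_N)\le (n-1)S_N+a|x_0^{(1)}|,$$ so that $S_N$ is bounded above as $N\to\infty$ if and only if $f(x_N)$ is bounded below. Furthermore, $f(x_N)$ is bounded below if and only if $x_N$ converges to a point $\bar x$ with $\bar x^{(1)}=0$.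
   Context: $x^{(i)}$ is the $i$-th coordinate. At iteration $k$ (where $f$ is differentiable at $x_k$), the Armijo condition is $A(t)$: $f(x_k+td_k)\le f(x_k)+c_1t\nabla f(x_k)^Td_k$; the Wolfe condition is $W(t)$: $f$ is differentiable at $x_k+td_k$ and $\nabla f(x_k+td_k)^Td_k\ge c_2\nabla f(x_k)^Td_k$. (Wolfe at each step guarantees $f$ is differentiable at every iterate.) *)

From HB Require Import structures.
From mathcomp Require Import all_boot all_order all_algebra.
From mathcomp Require Import all_classical all_reals all_analysis.
Set Implicit Arguments. Unset Strict Implicit. Unset Printing Implicit Defensive.
Import Order.TTheory GRing.Theory Num.Theory.
Import numFieldNormedType.Exports.
Local Open Scope ring_scope.

(* The first coordinate index x^(1) (index 0 in 'I_n), available as n >= 2. *)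
Definition i1 (n : nat) (hn : (1 < n)%N) : 'I_n := Ordinal (ltnW hn).

Definition fobj (R : realType) (n : nat) (hn : (1 < n)%N) (a : R)
  (x : 'rV[R]_n) : R :=
  a * `|x 0 (i1 hn)| + \sum_(i < n | i != i1 hn) x 0 i.

Definition dotv (R : realType) (n : nat) (u v : 'rV[R]_n) : R :=
  \sum_(i < n) u 0 i * v 0 i.

Definition grad (R : realType) (n : nat) (f : 'rV[R]_n -> R) (x : 'rV[R]_n)
  : 'rV[R]_n := \row_i ('d f x (delta_mx 0 i)).

Definition armijo (R : realType) (n : nat) (f : 'rV[R]_n -> R) (c1 : R)
  (xk dk : 'rV[R]_n) (t : R) : Prop :=
  f (xk + t *: dk) <= f xk + c1 * t * dotv (grad f xk) dk.

Definition wolfe (R : realType) (n : nat) (f : 'rV[R]_n -> R) (c2 : R)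
  (xk dk : 'rV[R]_n) (t : R) : Prop :=
  differentiable f (xk + t *: dk) /\
  dotv (grad f (xk + t *: dk)) dk >= c2 * dotv (grad f xk) dk.

From HB Require Import structures.
From mathcomp Require Import all_boot all_order all_algebra.
From mathcomp Require Import all_classical all_reals all_analysis.
From mathcomp Require Import lra ring.
Set Implicit Arguments. Unset Strict Implicit. Unset Printing Implicit Defensive.
Import Order.TTheory GRing.Theory Num.Theory.
Import numFieldNormedType.Exports.
Local Open Scope classical_set_scope.
Local Open Scope ring_scope.

(* The function f is differentiable exactly off the hyperplane x^(1) = 0,
   where its gradient is (a sgn x^(1), 1, ..., 1).  The Wolfe condition at t_k
   demands differentiability at x_(k+1), and because c2 < 1 its curvature
   inequality rules out sgn x_(k+1)^(1) = sgn x_k^(1): every step flips the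
   sign of the first coordinate, so |x_(k+1)^(1)| = a t_k - |x_k^(1)| <= a t_k,
   while every other coordinate decreases by exactly t_k.  Hence
   f(x_N) = a |x_N^(1)| + sum_(i>=2) x_0^(i) - (n-1) S_N, which together with
   the telescoped Armijo inequalities gives both bounds.  If S_N is bounded it
   converges, so t_k -> 0, x_N^(1) -> 0 and the other coordinates converge;
   conversely S_N is read off any coordinate i >= 2 of x_N. *)

Lemma derive_near_quotient {R : numFieldType} {V W : normedModType R}
    (g : V -> W) (x v : V) (c : W) :
  (\forall h \near 0^', h^-1 *: (g (h *: v + x) - g x) = c) -> 'D_v g x = c.
Proof.
move=> qc; apply: cvg_lim; first exact: norm_hausdorff.
have qcE : {near 0^', (fun=> c) =1
                      fun h : R => h^-1 *: ((g \o shift x) (h *: v) - g x)}.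
  by near=> h; rewrite /= (near qc h).
exact: cvg_trans (near_eq_cvg qcE) (cvg_cst c).
Unshelve. all: by end_near. Qed.

Lemma normrD_near {R : realDomainType} (r h : R) :
  `|h| < `|r| -> `|r + h| = `|r| + Num.sg r * h.
Proof.
rewrite ltr_norml; case: sgrP => [_|r_gt0|r_lt0] /andP[h_gt h_lt]; first lra.
- by rewrite gtr0_norm //; lra.
- by rewrite ltr0_norm //; lra.
Qed.

Lemma cvg_rV_entries {R : numFieldType} n (u : nat -> 'rV[R]_n) (l : 'rV[R]_n) :
  (forall i, (fun k => u k 0 i) @ \oo --> l 0 i) -> u @ \oo --> l.
Proof.
move=> ul; rewrite [l]row_sum_delta.
under eq_cvg do rewrite [u _]row_sum_delta.
apply: cvg_big => [|i _]; first exact: add_continuous.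
exact: cvgZr_tmp.
Qed.

Lemma differentiable_normr {R : realType} (r : R) :
  r != 0 -> differentiable (fun s : R => `|s|) r.
Proof.
move=> r_neq0; apply/derivable1_diffP.
apply: (@near_eq_derivable _ _ _ (fun s => Num.sg r *: s)); last first.
  exact: diff_derivable.
have r_gt0 : 0 < `|r| by rewrite normr_gt0.
apply/nbhs_ballP; exists `|r| => // s; rewrite /ball /= distrC => near_r.
by rewrite -(subrKC r s) normrD_near // [`|r|]normrEsg -mulrDr.
Qed.

Lemma dotvNr {R : realType} n (u v : 'rV[R]_n) : dotv u (- v) = - dotv u v.
Proof. by rewrite /dotv -sumrN; apply: eq_bigr => i _; rewrite mxE mulrN. Qed.

Section fobj.
Variables (R : realType) (n : nat) (hn : (1 < n)%N) (a : R).
Local Notation j1 := (i1 hn).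
Local Notation f := (fobj hn a).

Definition fobj_grad (y : 'rV[R]_n) : 'rV[R]_n :=
  \row_j (if j == j1 then a * Num.sg (y 0 j1) else 1).

Lemma sum_neq_i1_cst (c : R) : \sum_(i < n | i != j1) c = (n%:R - 1) * c.
Proof.
rewrite sumr_const (@eq_card _ _ (predC1 j1)) // cardC1 card_ord.
by rewrite -[in RHS](prednK (ltnW hn)) -natr1 addrK mulr_natl.
Qed.

Lemma fobj_shift (y : 'rV[R]_n) (j : 'I_n) (h : R) :
  f (h *: delta_mx 0 j + y) =
  f y + (if j == j1 then a * (`|y 0 j1 + h| - `|y 0 j1|) else h).
Proof.
have yE i : (h *: delta_mx 0 j + y) 0 i = y 0 i + h * (i == j)%:R.
  by rewrite !mxE eqxx addrC.
rewrite /fobj yE; under eq_bigr do rewrite yE.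
rewrite big_split /= -mulr_sumr eq_sym; case: eqP => [->|/eqP j1j].
  by rewrite mulr1 [X in h * X]big1 => [|i /negbTE ->] //; ring.
rewrite mulr0 addr0 [X in h * X](bigD1 j) //= eqxx.
by rewrite [X in 1 + X]big1 => [|i /andP[_ /negbTE ->]] //; ring.
Qed.

Lemma fobj_differentiable (y : 'rV[R]_n) :
  y 0 j1 != 0 -> differentiable f y.
Proof.
move=> y1_neq0.
have -> : f = (fun z => a * `|z 0 j1|) + \sum_(i < n | i != j1) (fun z => z 0 i).
  by apply/funext => z; rewrite /= fct_sumE.
apply: differentiableD.
  apply: (@differentiable_comp _ _ _ _ (fun z : 'rV[R]_n => z 0 j1)
                               (fun s => a * `|s|)).
    exact: differentiable_coord.
  by apply: differentiableM => //; exact: differentiable_normr.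
elim/big_ind: _ => [|g h dg dh|i _]; first exact: differentiable_cst.
  exact: differentiableD.
exact: differentiable_coord.
Qed.

Lemma derive_fobj (y : 'rV[R]_n) (j : 'I_n) :
  y 0 j1 != 0 -> 'D_(delta_mx 0 j) f y = fobj_grad y 0 j.
Proof.
move=> y1_neq0; apply: derive_near_quotient.
have y1_gt0 : 0 < `|y 0 j1| by rewrite normr_gt0.
near=> h.
have h_neq0 : h != 0 by near: h; exact: nbhs_dnbhs_neq.
have h_small : `|h| < `|y 0 j1| by near: h; exact: dnbhs0_lt.
rewrite fobj_shift addrC addKr mxE /GRing.scale /=.
case: eqP => _; last by rewrite mulVf.
by rewrite normrD_near // addrC addKr; field.
Unshelve. all: by end_near. Qed.

Lemma grad_fobj (y : 'rV[R]_n) : y 0 j1 != 0 -> grad f y = fobj_grad y.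
Proof.
move=> y1_neq0; apply/rowP => j.
rewrite [LHS]mxE -deriveE; [exact: derive_fobj|exact: fobj_differentiable].
Qed.

Lemma fobj_not_differentiable (y : 'rV[R]_n) :
  0 < a -> y 0 j1 = 0 -> ~ differentiable f y.
Proof.
move=> a_gt0 y1_eq0 /(@diff_derivable _ _ _ _ _ (delta_mx 0 j1)) /cvg_ex[/= l].
move=> /cvgrPdist_lt /(_ a a_gt0) /nbhs_ballP[e e_gt0 near_l].
have quot_near h : h != 0 -> `|h| < e -> `|l - a * Num.sg h| < a.
  move=> h_neq0 h_lt; have := near_l h; rewrite /ball /= sub0r normrN.
  move=> /(_ h_lt h_neq0); rewrite fobj_shift eqxx y1_eq0 add0r normr0 subr0.
  rewrite [f y + _]addrC addrK [`|h|]normrEsg.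
  suff -> : h^-1 *: (a * (Num.sg h * h)) = a * Num.sg h by [].
  by rewrite /GRing.scale /=; field.
have e2_gt0 : 0 < e / 2 by rewrite divr_gt0.
have := quot_near (e / 2); have := quot_near (- (e / 2)).
rewrite normrN gtr0_norm // sgrN gtr0_sg // !ltr_norml; lra.
Qed.

Lemma dotv_fobj_grad (y x : 'rV[R]_n) :
  dotv (fobj_grad y) (fobj_grad x) =
  a ^+ 2 * (Num.sg (y 0 j1) * Num.sg (x 0 j1)) + (n%:R - 1).
Proof.
rewrite /dotv (bigD1 j1) //= !mxE eqxx.
under eq_bigr => i /negbTE i_neq do rewrite !mxE i_neq mulr1.
by rewrite sum_neq_i1_cst; ring.
Qed.

Lemma fobj_descent_coord (X : 'rV[R]_n) (t : R) (i : 'I_n) :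
  (X + t *: - fobj_grad X) 0 i = X 0 i - t * fobj_grad X 0 i.
Proof. by rewrite !mxE mulrN. Qed.

Lemma fobj_armijo_decrease (c1 t : R) (X : 'rV[R]_n) :
  X 0 j1 != 0 -> armijo f c1 X (- fobj_grad X) t ->
  f (X + t *: - fobj_grad X) <= f X - c1 * (a ^+ 2 + n%:R - 1) * t.
Proof.
move=> X1_neq0; rewrite /armijo grad_fobj // dotvNr dotv_fobj_grad.
by rewrite -expr2 sqr_sg X1_neq0 mulr1 !addrA mulrN -!mulrA [t * _]mulrC.
Qed.

Lemma fobj_wolfe_sign_flip (c2 t : R) (X : 'rV[R]_n) :
  0 < a -> c2 < 1 -> X 0 j1 != 0 -> wolfe f c2 X (- fobj_grad X) t ->
  Num.sg ((X + t *: - fobj_grad X) 0 j1) * Num.sg (X 0 j1) = -1.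
Proof.
move=> a_gt0 c2_lt1 X1_neq0 [dY]; set Y := X + _.
have Y1_neq0 : Y 0 j1 != 0.
  by apply/eqP => /(fobj_not_differentiable a_gt0); exact.
rewrite !grad_fobj // !dotvNr !dotv_fobj_grad -expr2 sqr_sg X1_neq0 -sgrM.
have n_ge2 : (2 : R) <= n%:R by rewrite ler_nat.
have a2_gt0 : 0 < a ^+ 2 by rewrite exprn_gt0.
have : 0 < (1 - c2) * (a ^+ 2 + (n%:R - 1)) by apply: mulr_gt0; lra.
case: sgrP => [/eqP|_|_] //; last by rewrite !mulr1; lra.
by rewrite mulf_eq0 (negbTE X1_neq0) (negbTE Y1_neq0).
Qed.

Lemma fobj_wolfe_step (c2 t : R) (X : 'rV[R]_n) :
  0 < a -> c2 < 1 -> X 0 j1 != 0 -> wolfe f c2 X (- fobj_grad X) t ->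
  [/\ 0 < t, (X + t *: - fobj_grad X) 0 j1 != 0 &
      `|(X + t *: - fobj_grad X) 0 j1| = t * a - `|X 0 j1|].
Proof.
move=> a_gt0 c2_lt1 X1_neq0 /(fobj_wolfe_sign_flip a_gt0 c2_lt1 X1_neq0).
set Y := X + _ => /eqP; rewrite mulr_sg_eqN1 => /andP[Y1_neq0 /eqP sgY].
have normY : `|Y 0 j1| = t * a - `|X 0 j1|.
  rewrite normrEsg sgY fobj_descent_coord !mxE eqxx [`|X 0 j1|]normrEsg.
  have sgX2 : Num.sg (X 0 j1) * Num.sg (X 0 j1) = 1.
    by rewrite -expr2 sqr_sg X1_neq0.
  by rewrite -[t * a]mulr1 -sgX2; ring.
split=> //; have : 0 < `|Y 0 j1| by rewrite normr_gt0.
have : 0 < `|X 0 j1| by rewrite normr_gt0.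
rewrite normY -(pmulr_lgt0 t a_gt0); lra.
Qed.

End fobj.

Definition armijo_wolfe_descent {R : realType} {n : nat} (f : 'rV[R]_n -> R)
    (c1 c2 : R) (x d : nat -> 'rV[R]_n) (t : nat -> R) : Prop :=
  forall k, [/\ d k = - grad f (x k), x k.+1 = x k + t k *: d k,
               armijo f c1 (x k) (d k) (t k) & wolfe f c2 (x k) (d k) (t k)].

Section fobj_descent.
Variables (R : realType) (n : nat) (hn : (1 < n)%N) (a c1 c2 : R).
Variables (x d : nat -> 'rV[R]_n) (t : nat -> R).
Local Notation j1 := (i1 hn).
Local Notation f := (fobj hn a).
Local Notation S N := (\sum_(0 <= k < N) t k).
Hypotheses (a_gt0 : 0 < a) (c1_gt0 : 0 < c1) (c2_lt1 : c2 < 1).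
Hypothesis x01_neq0 : x 0%N 0 j1 != 0.
Hypothesis descent : armijo_wolfe_descent f c1 c2 x d t.

Lemma iterate_first_coord_neq0 k : x k 0 j1 != 0.
Proof.
elim: k => // k x1_neq0; have [d_grad x_next _ W] := descent k.
move: W; rewrite x_next d_grad grad_fobj //.
by case/(fobj_wolfe_step a_gt0 c2_lt1 x1_neq0).
Qed.

Lemma direction_fobj_grad k : d k = - fobj_grad hn a (x k).
Proof.
by have [-> _ _ _] := descent k; rewrite grad_fobj // iterate_first_coord_neq0.
Qed.

Lemma iterate_wolfe_step k :
  0 < t k /\ `|x k.+1 0 j1| = t k * a - `|x k 0 j1|.
Proof.
have [_ -> _ W] := descent k; move: W; rewrite direction_fobj_grad.
by case/(fobj_wolfe_step a_gt0 c2_lt1 (iterate_first_coord_neq0 k)).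
Qed.

Lemma fobj_iterate_decrease k :
  f (x k.+1) <= f (x k) - c1 * (a ^+ 2 + n%:R - 1) * t k.
Proof.
have [_ -> A _] := descent k; move: A; rewrite direction_fobj_grad.
exact: fobj_armijo_decrease (iterate_first_coord_neq0 k).
Qed.

Lemma iterate_coord k i : i != j1 -> x k 0 i = x 0%N 0 i - S k.
Proof.
move=> /negbTE i_neq; elim: k => [|k IHk]; first by rewrite big_geq ?subr0.
have [_ -> _ _] := descent k.
rewrite direction_fobj_grad fobj_descent_coord mxE i_neq mulr1 IHk.
by rewrite big_nat_recr //= opprD addrA.
Qed.

Lemma fobj_iterate N :
  f (x N) =
  a * `|x N 0 j1| + \sum_(i < n | i != j1) x 0%N 0 i - (n%:R - 1) * S N.
Proof.
rewrite /fobj; under eq_bigr => i i_neq do rewrite iterate_coord //.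
by rewrite sumrB sum_neq_i1_cst addrA.
Qed.

Lemma fobj_iterate_lower N :
  c1 * (a ^+ 2 + n%:R - 1) * S N <= f (x 0%N) - f (x N).
Proof.
elim: N => [|N IHN]; first by rewrite big_geq // mulr0 subrr.
by rewrite big_nat_recr //= mulrDr; have := fobj_iterate_decrease N; lra.
Qed.

Lemma fobj_iterate_upper N :
  f (x 0%N) - f (x N) <= (n%:R - 1) * S N + a * `|x 0%N 0 j1|.
Proof.
rewrite !fobj_iterate big_geq // mulr0 subr0.
by have := mulr_ge0 (ltW a_gt0) (normr_ge0 (x N 0 j1)); lra.
Qed.

Lemma steps_bounded_iff_fobj_bounded_below :
  (exists M, forall N, S N <= M) <-> (exists m, forall N, m <= f (x N)).
Proof.
have n_ge2 : (2 : R) <= n%:R by rewrite ler_nat.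
split=> [[M S_le]|[m f_ge]].
  exists (\sum_(i < n | i != j1) x 0%N 0 i - (n%:R - 1) * M) => N.
  rewrite fobj_iterate; have := mulr_ge0 (ltW a_gt0) (normr_ge0 (x N 0 j1)).
  have : (n%:R - 1) * S N <= (n%:R - 1) * M by rewrite ler_wpM2l // ?S_le; lra.
  lra.
have K_gt0 : 0 < c1 * (a ^+ 2 + n%:R - 1).
  by rewrite mulr_gt0 // (lt_le_trans (exprn_gt0 2 a_gt0)) //; lra.
exists ((f (x 0%N) - m) / (c1 * (a ^+ 2 + n%:R - 1))) => N.
rewrite ler_pdivlMr // mulrC.
by have := fobj_iterate_lower N; have := f_ge N; lra.
Qed.

Lemma steps_nondecreasing : nondecreasing_seq (fun N => S N).
Proof.
apply/nondecreasing_seqP => N; rewrite big_nat_recr //= lerDl.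
by case: (iterate_wolfe_step N) => /ltW.
Qed.

Lemma steps_sum_cvg_iff_bounded :
  cvgn (fun N => S N) <-> exists M, forall N, S N <= M.
Proof.
split=> [S_cvg|[M S_le]].
  exists (limn (fun N => S N)).
  exact: nondecreasing_cvgn_le steps_nondecreasing S_cvg.
apply: cvgP (nondecreasing_cvgn steps_nondecreasing _).
by exists M => _ [N _ <-].
Qed.

Lemma steps_cvg0 : cvgn (fun N => S N) -> t @ \oo --> 0.
Proof.
move=> S_cvg; have -> : t = fun k => S k.+1 - S k.
  by apply/funext => k; rewrite big_nat_recr //= addrC addrK.
rewrite -[X in _ --> X](subrr (limn (fun N => S N))).
by apply: cvgB => //; rewrite (cvg_shiftS (fun N => S N)).
Qed.

Lemma iterate_first_coord_cvg0 :
  t @ \oo --> 0 -> (fun N => x N 0 j1) @ \oo --> 0.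
Proof.
move=> t_cvg0; apply/norm_cvg0P.
rewrite -(cvg_shiftS (fun N => `|x N 0 j1|)).
apply: (@squeeze_cvgr _ _ _ _ (cst 0) (fun k => t k * a)).
- near=> k; rewrite /= normr_ge0 /=; case: (iterate_wolfe_step k) => _ ->.
  by have := normr_ge0 (x k 0 j1); lra.
- exact: cvg_cst.
- by rewrite -(mul0r a); apply: cvgMr_tmp.
Unshelve. all: by end_near. Qed.

Lemma iterate_cvg_of_steps_sum_cvg : cvgn (fun N => S N) ->
  exists xbar : 'rV[R]_n, x @ \oo --> xbar /\ xbar 0 j1 = 0.
Proof.
move=> S_cvg; have x1_cvg0 := iterate_first_coord_cvg0 (steps_cvg0 S_cvg).
exists (\row_i (if i == j1 then 0 else x 0%N 0 i - limn (fun N => S N))).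
split; last by rewrite mxE eqxx.
apply: cvg_rV_entries => i; rewrite mxE; case: eqP => [-> //|/eqP i_neq].
under eq_cvg do rewrite iterate_coord //.
exact: cvgB (cvg_cst _) S_cvg.
Qed.

Lemma steps_sum_cvg_of_iterate_cvg :
  (exists xbar : 'rV[R]_n, x @ \oo --> xbar) -> cvgn (fun N => S N).
Proof.
move=> [xbar x_cvg]; pose j2 : 'I_n := Ordinal hn.
have -> : (fun N => S N) = fun N => x 0%N 0 j2 - x N 0 j2.
  by apply/funext => N; rewrite [x N 0 j2]iterate_coord // opprB addrC subrK.
apply: cvgP (cvgB (cvg_cst _) _).
exact: cvg_comp x_cvg (@coord_continuous R 1 n 0 j2 xbar).
Qed.

End fobj_descent.

Theorem theorem1 (R : realType) (n : nat) (hn : (1 < n)%N) (a c1 c2 : R)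
  (x d : nat -> 'rV[R]_n) (t : nat -> R) :
  Num.sqrt (n%:R - 1) <= a ->
  0 < c1 -> c1 < c2 -> c2 < 1 ->
  x 0%N 0 (i1 hn) != 0 ->
  (forall k, d k = - grad (fobj hn a) (x k)) ->
  (forall k, x k.+1 = x k + t k *: d k) ->
  (forall k, armijo (fobj hn a) c1 (x k) (d k) (t k)) ->
  (forall k, wolfe (fobj hn a) c2 (x k) (d k) (t k)) ->
  let S := fun N : nat => \sum_(0 <= k < N) t k in
  (forall N : nat, (1 <= N)%N ->
     c1 * (a ^+ 2 + n%:R - 1) * S N <= fobj hn a (x 0%N) - fobj hn a (x N)
     /\ fobj hn a (x 0%N) - fobj hn a (x N)
          <= (n%:R - 1) * S N + a * `|x 0%N 0 (i1 hn)|)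
  /\ ((exists M : R, forall N, S N <= M) <->
      (exists m : R, forall N, m <= fobj hn a (x N)))
  /\ ((exists m : R, forall N, m <= fobj hn a (x N)) <->
      (exists xbar : 'rV[R]_n, x @ \oo --> xbar /\ xbar 0 (i1 hn) = 0)).
Proof.
move=> a_ge c1_gt0 _ c2_lt1 x01_neq0 d_grad x_next armijo_t wolfe_t S.
have a_gt0 : 0 < a by apply: lt_le_trans a_ge; rewrite sqrtr_gt0 subr_gt0 ltr1n.
have descent : armijo_wolfe_descent (fobj hn a) c1 c2 x d t by move=> k; split.
have S_fobj :=
  steps_bounded_iff_fobj_bounded_below a_gt0 c1_gt0 c2_lt1 x01_neq0 descent.
have S_cvg := steps_sum_cvg_iff_bounded a_gt0 c2_lt1 x01_neq0 descent.
split; [|split] => //.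
- move=> N _; split.
    exact: fobj_iterate_lower a_gt0 c2_lt1 x01_neq0 descent N.
  exact: fobj_iterate_upper a_gt0 c2_lt1 x01_neq0 descent N.
- rewrite -S_fobj -S_cvg; split.
    exact: iterate_cvg_of_steps_sum_cvg a_gt0 c2_lt1 x01_neq0 descent.
  move=> [xbar [x_cvg _]].
  apply: steps_sum_cvg_of_iterate_cvg a_gt0 c2_lt1 x01_neq0 descent _.
  by exists xbar.
Qed.
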